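(* Let $f:\mathbb{R}^n\to\mathbb{R}^n$ be locally Lipschitz with $f(0)=0$ and let $V\in C^2(\mathbb{R}^n;\mathbb{R}^+)$ be a Lyapunov function for $\dot z=f(z)$. Let $r>0$ and define $q(x):=\max\{f(x)'\nabla^2V(x+hf(x))f(x):h\in[0,r]\}$. Suppose there exist constants $\delta\in(0,r]$, $\lambda\in(0,1)$ and a neighborhood $\mathcal N$ of $0$ such that $\delta q(x)\le-2(1-\lambda)\nabla V(x)f(x)$ for all $x\in\mathcal N$. Then there exists a continuous $\varphi:\mathbb{R}^n\to(0,r]$ such that $0$ is URGAS for the hybrid system (2.2) with $F(h,x):=f(x)$ (explicit Euler). More precisely, $0$ is URGAS for (2.2) with $F(h,x)=f(x)$ whenever $\varphi:\mathbb{R}^n\to(0,r]$ is continuous and satisfies $\varphi(x)q(x)\le-2(1-\lambda)\nabla V(x)f(x)$ for all $x\in\mathbb{R}^n$.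
   Context: The hybrid system (2.2) with $F(h,x)=f(x)$: for each locally bounded $u:\mathbb{R}^+\to\mathbb{R}^+$ and $x_0$, $\tau_0=0$, $x(0)=x_0$, $h_i=\varphi(x(\tau_i))\exp(-u(\tau_i))$, $\tau_{i+1}=\tau_i+h_i$, $x(t)=x(\tau_i)+(t-\tau_i)f(x(\tau_i))$ on $[\tau_i,\tau_{i+1}]$; denote the solution $x(t,x_0;u)$. URGAS: (a) for every $\varepsilon>0$ there is $\delta'>0$ with $|x_0|<\delta'\Rightarrow|x(t,x_0;u)|<\varepsilon$ for all $t\ge0$ and all $u$; (b) for every $R$, $\sup\{|x(t,x_0;u)|:t\ge0,|x_0|\le R,u\}<\infty$; (c) for all $\varepsilon,R$ there is $T$ with $|x(t,x_0;u)|\le\varepsilon$ for $t\ge T$, $|x_0|\le R$, all locally bounded $u\ge0$. A Lyapunov function for $\dot z=f(z)$ is a positive definite, radially unbounded $C^1$ function $V$ with $\nabla V(x)f(x)<0$ for $x\ne0$. $\nabla^2V$ is the Hessian. *)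

From mathcomp Require Import ssreflect ssrfun ssrbool eqtype ssrnat seq choice fintype.
From Stdlib Require Import Reals.

Set Implicit Arguments.
Local Open Scope R_scope.

Definition vec (n : nat) := 'I_n -> R.

Definition vzero {n} : vec n := fun _ => 0.
Definition vadd {n} (x y : vec n) : vec n := fun i => x i + y i.
Definition vsub {n} (x y : vec n) : vec n := fun i => x i - y i.
Definition vscale {n} (a : R) (x : vec n) : vec n := fun i => a * x i.

Definition vsum {n} (F : 'I_n -> R) : R := foldr Rplus 0 (map F (enum 'I_n)).

Definition dot {n} (x y : vec n) : R := vsum (fun i => x i * y i).
Definition vnorm {n} (x : vec n) : R := sqrt (dot x x).

Definition vcont {n} (g : vec n -> R) : Prop :=
  forall x eps, 0 < eps -> exists d, 0 < d /\
    forall y, vnorm (vsub y x) < d -> Rabs (g y - g x) < eps.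

Definition loc_lipschitz {n} (f : vec n -> vec n) : Prop :=
  forall x, exists eps L, 0 < eps /\ 0 <= L /\
    forall y z, vnorm (vsub y x) < eps -> vnorm (vsub z x) < eps ->
      vnorm (vsub (f y) (f z)) <= L * vnorm (vsub y z).

Definition has_gradient {n} (F : vec n -> R) (G : vec n -> vec n) : Prop :=
  forall x eps, 0 < eps -> exists d, 0 < d /\
    forall y, vnorm (vsub y x) < d ->
      Rabs (F y - F x - dot (G x) (vsub y x)) <= eps * vnorm (vsub y x).

Definition C2_with {n} (V : vec n -> R) (gV : vec n -> vec n)
    (HV : vec n -> 'I_n -> vec n) : Prop :=
  has_gradient V gV /\
  (forall i, has_gradient (fun x => gV x i) (fun x => HV x i)) /\
  (forall i j, vcont (fun x => HV x i j)).

Definition lyapunov {n} (f : vec n -> vec n) (V : vec n -> R) (gV : vec n -> vec n) : Prop :=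
  V vzero = 0 /\
  (forall x, x <> vzero -> 0 < V x) /\
  (forall M, exists Rr, forall x, Rr <= vnorm x -> M <= V x) /\
  (forall x, x <> vzero -> dot (gV x) (f x) < 0).

Definition quadform {n} (A : 'I_n -> vec n) (v : vec n) : R :=
  dot v (fun i => dot (A i) v).

Definition is_max (S : R -> Prop) (m : R) : Prop :=
  S m /\ forall y, S y -> y <= m.

Definition admissible_input (u : R -> R) : Prop :=
  (forall t, 0 <= t -> 0 <= u t) /\
  (forall T, 0 <= T -> exists M, forall t, 0 <= t <= T -> u t <= M).

(* sampling instants and states of the hybrid system (2.2), F(h,x) = f(x):
   hstate i = (tau_i, x(tau_i)) *)
Fixpoint hstate {n} (phi : vec n -> R) (f : vec n -> vec n) (u : R -> R)
    (x0 : vec n) (i : nat) : R * vec n :=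
  match i with
  | O => (0, x0)
  | S k =>
      let (tk, xk) := hstate phi f u x0 k in
      let hk := phi xk * exp (- u tk) in
      (tk + hk, vadd xk (vscale hk (f xk)))
  end.

Definition sol_at {n} (phi : vec n -> R) (f : vec n -> vec n) (u : R -> R)
    (x0 : vec n) (t : R) (y : vec n) : Prop :=
  exists i,
    fst (hstate phi f u x0 i) <= t <= fst (hstate phi f u x0 (S i)) /\
    y = vadd (snd (hstate phi f u x0 i))
             (vscale (t - fst (hstate phi f u x0 i)) (f (snd (hstate phi f u x0 i)))).

Definition URGAS {n} (phi : vec n -> R) (f : vec n -> vec n) : Prop :=
  (forall eps, 0 < eps -> exists d, 0 < d /\
     forall x0 u t y, admissible_input u -> vnorm x0 < d -> 0 <= t ->
       sol_at phi f u x0 t y -> vnorm y < eps) /\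
  (forall Rr, 0 <= Rr -> exists M,
     forall x0 u t y, admissible_input u -> vnorm x0 <= Rr -> 0 <= t ->
       sol_at phi f u x0 t y -> vnorm y <= M) /\
  (forall eps Rr, 0 < eps -> 0 <= Rr -> exists T,
     forall x0 u t y, admissible_input u -> vnorm x0 <= Rr -> T <= t ->
       sol_at phi f u x0 t y -> vnorm y <= eps).

From mathcomp Require Import ssreflect ssrfun ssrbool eqtype ssrnat seq choice fintype.
From Stdlib Require Import Reals Lra Lia Psatz Classical ClassicalEpsilon FunctionalExtensionality Rtopology.
Local Open Scope R_scope.

(* The argument is a Lyapunov argument for the sampled system.  By Taylor's
   formula along the segment [x, x + s f(x)], for 0 <= s <= phi(x) <= r,
     V(x + s f(x)) <= V(x) + s gradV(x).f(x) + s^2/2 q(x),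
   so the condition phi q <= -2 (1 - lambda) gradV.f yields the descent estimate
     V(x + s f(x)) <= V(x) + lambda s gradV(x).f(x)                 (euler_descent).
   Every point of a solution lies on such a segment, so V is nonincreasing along
   solutions, which gives uniform stability and boundedness; on compact bands
   b <= V <= M0 the rate -gradV.f is bounded below by c > 0, so V drops below b
   by time M0 / (lambda c), which gives uniform attractivity (urgas_of_descent).
   For the existence part, an explicit continuous step size is built from delta
   near the origin and from -gradV.f / (1 + max(q, 0)) away from it (step_size);
   its continuity rests on the continuity of q, a maximum over the compact
   parameter interval [0, r] of a jointly continuous function. *)

Lemma nonneg_quadratic_discriminant a b c :
  0 <= c -> (forall t, 0 <= a - 2 * t * b + t * t * c) -> b * b <= a * c.
Proof.
move=> Hc H; case: (Rle_lt_or_eq_dec 0 c Hc) => [Hc0|Ec]; last rewrite -Ec in H *.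
- have E : (a - 2 * (b / c) * b + b / c * (b / c) * c) * c = a * c - b * b by field; lra.
  have := Rmult_le_pos _ _ (H (b / c)) Hc; lra.
- case: (Req_dec b 0) => [->|Hb]; first by have := H 0; lra.
  have := H ((a + 1) / (2 * b)).
  have -> : a - 2 * ((a + 1) / (2 * b)) * b + (a + 1) / (2 * b) * ((a + 1) / (2 * b)) * 0 = -1
    by field.
  lra.
Qed.

Section Euclidean.
Context {n : nat}.
Implicit Types (x y z v : vec n) (F G : 'I_n -> R) (s : seq 'I_n).

Definition lsum s F : R := foldr Rplus 0 (map F s).

Lemma lsum_nil F : lsum [::] F = 0.
Proof. by []. Qed.

Lemma lsum_cons a s F : lsum (a :: s) F = F a + lsum s F.
Proof. by []. Qed.

Lemma lsum_ext s F G : (forall i, F i = G i) -> lsum s F = lsum s G.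
Proof. by move=> H; elim: s => [|a s IH] //; rewrite !lsum_cons H IH. Qed.

Lemma lsum_plus s F G : lsum s (fun i => F i + G i) = lsum s F + lsum s G.
Proof. elim: s => [|a s IH]; rewrite ?lsum_nil ?lsum_cons; [lra|rewrite IH; lra]. Qed.

Lemma lsum_scal s F c : lsum s (fun i => c * F i) = c * lsum s F.
Proof. elim: s => [|a s IH]; rewrite ?lsum_nil ?lsum_cons; [lra|rewrite IH; lra]. Qed.

Lemma lsum_le s F G : (forall i, F i <= G i) -> lsum s F <= lsum s G.
Proof.
move=> H; elim: s => [|a s IH]; rewrite ?lsum_nil ?lsum_cons; [lra|].
by have := H a; lra.
Qed.

Lemma lsum_zero s : lsum s (fun _ => 0) = 0.
Proof. elim: s => [|a s IH]; rewrite ?lsum_nil ?lsum_cons; [lra|rewrite IH; lra]. Qed.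

Lemma lsum_nonneg s F : (forall i, 0 <= F i) -> 0 <= lsum s F.
Proof. by move=> H; rewrite -(lsum_zero s); apply: lsum_le. Qed.

Lemma lsum_term s F i : (forall j, 0 <= F j) -> i \in s -> F i <= lsum s F.
Proof.
move=> H; elim: s => [|a s IH] //; rewrite in_cons lsum_cons => /orP [/eqP ->|Hi].
- by have := lsum_nonneg s F H; lra.
- by have := IH Hi; have := H a; lra.
Qed.

Lemma lsum_sq s F :
  lsum s (fun i => F i * F i) <= lsum s (fun i => Rabs (F i)) * lsum s (fun i => Rabs (F i)).
Proof.
elim: s => [|a s IH]; rewrite ?lsum_nil ?lsum_cons; [lra|].
have h1 := lsum_nonneg s _ (fun i => Rabs_pos (F i)).
have h2 := Rabs_pos (F a).
have h3 : F a * F a = Rabs (F a) * Rabs (F a) by rewrite -Rabs_mult Rabs_right //; nra.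
nra.
Qed.

Lemma dot_lsum x y : dot x y = lsum (enum 'I_n) (fun i => x i * y i).
Proof. by []. Qed.

Lemma dot_comm x y : dot x y = dot y x.
Proof. by rewrite !dot_lsum; apply: lsum_ext => i; lra. Qed.

Lemma dot_addl x y z : dot (vadd x y) z = dot x z + dot y z.
Proof. by rewrite !dot_lsum -lsum_plus; apply: lsum_ext => i; rewrite /vadd; lra. Qed.

Lemma dot_scall a x y : dot (vscale a x) y = a * dot x y.
Proof. by rewrite !dot_lsum -lsum_scal; apply: lsum_ext => i; rewrite /vscale; lra. Qed.

Lemma dot_subl x y z : dot (vsub x y) z = dot x z - dot y z.
Proof.
have -> : vsub x y = vadd x (vscale (-1) y)
  by apply: functional_extensionality => i; rewrite /vsub /vadd /vscale; lra.
rewrite dot_addl dot_scall; lra.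
Qed.

Lemma dot_addr x y z : dot z (vadd x y) = dot z x + dot z y.
Proof. by rewrite dot_comm dot_addl (dot_comm _ x) (dot_comm _ y). Qed.

Lemma dot_subr x y z : dot z (vsub x y) = dot z x - dot z y.
Proof. by rewrite dot_comm dot_subl (dot_comm _ x) (dot_comm _ y). Qed.

Lemma dot_scalr a x y : dot y (vscale a x) = a * dot y x.
Proof. by rewrite dot_comm dot_scall (dot_comm _ x). Qed.

Lemma dot_pos x : 0 <= dot x x.
Proof. by rewrite dot_lsum; apply: lsum_nonneg => i; nra. Qed.

Lemma dot_zerol y : dot vzero y = 0.
Proof. by rewrite dot_lsum -(lsum_zero (enum 'I_n)); apply: lsum_ext => i; rewrite /vzero; lra. Qed.

(* Cauchy-Schwarz, squared form: the quadratic t |-> |x - t y|^2 is nonnegative. *)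
Lemma cauchy_schwarz_sq x y : dot x y * dot x y <= dot x x * dot y y.
Proof.
apply: nonneg_quadratic_discriminant; first exact: dot_pos.
move=> t; have := dot_pos (vsub x (vscale t y)).
rewrite !dot_subl !dot_subr !dot_scall !dot_scalr (dot_comm y x); lra.
Qed.

Lemma vnorm_pos x : 0 <= vnorm x.
Proof. exact: sqrt_pos. Qed.

Lemma vnorm_sq x : vnorm x * vnorm x = dot x x.
Proof. exact/sqrt_sqrt/dot_pos. Qed.

Lemma sq_le_le a b : 0 <= a -> 0 <= b -> a * a <= b * b -> a <= b.
Proof. move=> *; nra. Qed.

Lemma cauchy_schwarz x y : Rabs (dot x y) <= vnorm x * vnorm y.
Proof.
apply: sq_le_le; [exact: Rabs_pos | apply: Rmult_le_pos; exact: vnorm_pos |].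
have -> : Rabs (dot x y) * Rabs (dot x y) = dot x y * dot x y
  by rewrite -Rabs_mult Rabs_right //; nra.
have -> : vnorm x * vnorm y * (vnorm x * vnorm y) = (vnorm x * vnorm x) * (vnorm y * vnorm y)
  by ring.
rewrite !vnorm_sq; exact: cauchy_schwarz_sq.
Qed.

Lemma vnorm_scale a x : vnorm (vscale a x) = Rabs a * vnorm x.
Proof.
have E : vnorm (vscale a x) * vnorm (vscale a x) = (Rabs a * vnorm x) * (Rabs a * vnorm x).
  have -> : Rabs a * vnorm x * (Rabs a * vnorm x) = (Rabs a * Rabs a) * (vnorm x * vnorm x) by ring.
  have Ha : a * a >= 0 by nra.
  by rewrite !vnorm_sq dot_scall dot_scalr -Rabs_mult (Rabs_right _ Ha); ring.
have Hw : 0 <= Rabs a * vnorm x by apply: Rmult_le_pos; [exact: Rabs_pos | exact: vnorm_pos].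
have Hv := vnorm_pos (vscale a x).
by apply: Rle_antisym; apply: sq_le_le => //; lra.
Qed.

Lemma vnorm_triang x y : vnorm (vadd x y) <= vnorm x + vnorm y.
Proof.
apply: sq_le_le; [exact: vnorm_pos | have := vnorm_pos x; have := vnorm_pos y; lra |].
rewrite vnorm_sq dot_addl !dot_addr (dot_comm y x).
have := cauchy_schwarz x y; have := Rle_abs (dot x y).
have := vnorm_sq x; have := vnorm_sq y; nra.
Qed.

Lemma vnorm_triang_sub x y z : vnorm (vsub x z) <= vnorm (vsub x y) + vnorm (vsub y z).
Proof.
have -> : vsub x z = vadd (vsub x y) (vsub y z)
  by apply: functional_extensionality => i; rewrite /vsub /vadd; lra.
exact: vnorm_triang.
Qed.

Lemma vnorm_sub_sym x y : vnorm (vsub x y) = vnorm (vsub y x).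
Proof.
have -> : vsub x y = vscale (-1) (vsub y x)
  by apply: functional_extensionality => i; rewrite /vsub /vscale; lra.
by rewrite vnorm_scale Rabs_Ropp Rabs_R1 Rmult_1_l.
Qed.

Lemma vnorm_zero : vnorm (@vzero n) = 0.
Proof. by rewrite /vnorm dot_zerol sqrt_0. Qed.

Lemma vsub_zero x : vsub x vzero = x.
Proof. by apply: functional_extensionality => i; rewrite /vsub /vzero; lra. Qed.

Lemma vsub_diag x : vsub x x = vzero.
Proof. by apply: functional_extensionality => i; rewrite /vsub /vzero; lra. Qed.

Lemma coord_le x i : Rabs (x i) <= vnorm x.
Proof.
apply: sq_le_le; [exact: Rabs_pos | exact: vnorm_pos |].
have Hx : x i * x i >= 0 by nra.
rewrite vnorm_sq -Rabs_mult (Rabs_right _ Hx) dot_lsum. apply: (lsum_term _ (fun i => x i * x i)); first by move=> j; nra.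
by rewrite mem_enum.
Qed.

Lemma vnorm_le_l1 x : vnorm x <= lsum (enum 'I_n) (fun i => Rabs (x i)).
Proof.
apply: sq_le_le; [exact: vnorm_pos | apply: lsum_nonneg => i; exact: Rabs_pos |].
rewrite vnorm_sq dot_lsum; exact: lsum_sq.
Qed.

End Euclidean.

Lemma CV_const c : Un_cv (fun _ => c) c.
Proof. by move=> e He; exists 0%nat => k _; rewrite /Rdist Rminus_eq_0 Rabs_R0. Qed.

Lemma squeeze (a b : nat -> R) N :
  (forall k, (N <= k)%coq_nat -> 0 <= a k <= b k) -> Un_cv b 0 -> Un_cv a 0.
Proof.
move=> H Hb e He; case: (Hb e He) => N2 HN; exists (Nat.max N N2) => k Hk.
have h1 := HN k ltac:(lia); have h2 := H k ltac:(lia).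
rewrite /Rdist !Rminus_0_r in h1 *.
by rewrite Rabs_right in h1; [rewrite Rabs_right; lra | lra].
Qed.

Lemma Un_cv_dist (a : nat -> R) l : Un_cv a l <-> Un_cv (fun k => Rabs (a k - l)) 0.
Proof.
by split => H e He; case: (H e He) => N HN; exists N => k Hk; have := HN k Hk;
  rewrite /Rdist Rminus_0_r Rabs_Rabsolu.
Qed.

Lemma cv_le_bound (u : nat -> R) l b : (forall k, u k <= b) -> Un_cv u l -> l <= b.
Proof. by move=> H Hu; exact: (Rle_cv_lim H Hu (CV_const b)). Qed.

Lemma cv_ge_bound (u : nat -> R) l b : (forall k, b <= u k) -> Un_cv u l -> b <= l.
Proof. by move=> H Hu; exact: (Rle_cv_lim H (CV_const b) Hu). Qed.

Lemma inv_succ_pos k : 0 < / (INR k + 1).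
Proof. by apply: Rinv_0_lt_compat; have := pos_INR k; lra. Qed.

Lemma inv_succ_small e : 0 < e -> exists N, forall k, (N <= k)%coq_nat -> / (INR k + 1) < e.
Proof.
move=> He; case: (archimed_cor1 e He) => N [HN HN0]; exists N => k Hk.
apply: (Rle_lt_trans _ (/ INR N)) => //; apply: Rinv_le_contravar.
- by apply: lt_0_INR; lia.
- by have := le_INR _ _ Hk; lra.
Qed.

Lemma choice_seq (A : Type) (Q : nat -> A -> Prop) :
  (forall k, exists x, Q k x) -> exists y, forall k, Q k (y k).
Proof.
move=> H; exists (fun k => proj1_sig (constructive_indefinite_description _ (H k))).
by move=> k; exact: (proj2_sig (constructive_indefinite_description _ (H k))).
Qed.

(* min and max are continuous, via min/max = (a + b -/+ |a - b|) / 2. *)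
Lemma CV_max (a b : nat -> R) A B :
  Un_cv a A -> Un_cv b B -> Un_cv (fun k => Rmax (a k) (b k)) (Rmax A B).
Proof.
have Emax c d : Rmax c d = (c + d + Rabs (c - d)) * / 2
  by rewrite /Rmax /Rabs; case: (Rle_dec c d); case: (Rcase_abs (c - d)); lra.
move=> Ha Hb; rewrite Emax; apply: (Un_cv_ext (fun k => (a k + b k + Rabs (a k - b k)) * / 2)).
  by move=> k; rewrite Emax.
apply: CV_mult; last exact: CV_const.
by apply: CV_plus; [exact: CV_plus | apply: cv_cvabs; exact: CV_minus].
Qed.

Lemma CV_min (a b : nat -> R) A B :
  Un_cv a A -> Un_cv b B -> Un_cv (fun k => Rmin (a k) (b k)) (Rmin A B).
Proof.
have Emin c d : Rmin c d = (c + d - Rabs (c - d)) * / 2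
  by rewrite /Rmin /Rabs; case: (Rle_dec c d); case: (Rcase_abs (c - d)); lra.
move=> Ha Hb; rewrite Emin; apply: (Un_cv_ext (fun k => (a k + b k - Rabs (a k - b k)) * / 2)).
  by move=> k; rewrite Emin.
apply: CV_mult; last exact: CV_const.
by apply: CV_minus; [exact: CV_plus | apply: cv_cvabs; exact: CV_minus].
Qed.

Lemma CV_inv (a : nat -> R) A : Un_cv a A -> A <> 0 -> Un_cv (fun k => / a k) (/ A).
Proof.
move=> H HA; apply: (continuity_seq (fun x => / x)) => //.
by apply: (continuity_pt_inv id) => //; apply/derivable_continuous_pt/derivable_id.
Qed.

Section Sequences.
Context {n : nat}.
Implicit Types (x : vec n) (y : nat -> vec n) (s : seq 'I_n).

Definition vcv y x := Un_cv (fun k => vnorm (vsub (y k) x)) 0.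

Definition cont_at (g : vec n -> R) x := forall eps, 0 < eps -> exists d, 0 < d /\
  forall z, vnorm (vsub z x) < d -> Rabs (g z - g x) < eps.
Definition seq_cont_at (g : vec n -> R) x := forall y, vcv y x -> Un_cv (fun k => g (y k)) (g x).
Definition seq_vcont_at (F : vec n -> vec n) x :=
  forall y, vcv y x -> vcv (fun k => F (y k)) (F x).

Lemma lsum_cv s (F : nat -> 'I_n -> R) L :
  (forall i, Un_cv (fun k => F k i) (L i)) -> Un_cv (fun k => lsum s (F k)) (lsum s L).
Proof.
move=> H; elim: s => [|a s IH]; first exact: CV_const.
by rewrite lsum_cons; apply: (Un_cv_ext (fun k => F k a + lsum s (F k))) => //; apply: CV_plus.
Qed.

Lemma vcv_coord y x i : vcv y x -> Un_cv (fun k => y k i) (x i).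
Proof.
move=> H; apply/Un_cv_dist; apply: (squeeze _ (fun k => vnorm (vsub (y k) x)) 0%nat) => // k _.
by split; [exact: Rabs_pos | exact: (coord_le (vsub (y k) x) i)].
Qed.

Lemma coord_vcv y x : (forall i, Un_cv (fun k => y k i) (x i)) -> vcv y x.
Proof.
move=> H; apply: (squeeze _ (fun k => lsum (enum 'I_n) (fun i => Rabs (vsub (y k) x i))) 0%nat).
  by move=> k _; split; [exact: vnorm_pos | exact: vnorm_le_l1].
rewrite -(lsum_zero (enum 'I_n)); apply: lsum_cv => i; exact: (proj1 (Un_cv_dist _ _) (H i)).
Qed.

Lemma seq_cont_of_cont (g : vec n -> R) x : cont_at g x -> seq_cont_at g x.
Proof.
move=> H y Hy e He; case: (H e He) => d [Hd Hg]; case: (Hy d Hd) => N HN.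
exists N => k Hk; have := HN k Hk.
by rewrite /Rdist Rminus_0_r Rabs_right; [exact: Hg | apply/Rle_ge/vnorm_pos].
Qed.

Lemma cont_of_seq_cont (g : vec n -> R) x : seq_cont_at g x -> cont_at g x.
Proof.
move=> H e He; apply: NNPP => Hn.
have Hk k : exists z, vnorm (vsub z x) < / (INR k + 1) /\ e <= Rabs (g z - g x).
  apply: NNPP => Hk; apply: Hn; exists (/ (INR k + 1)); split; first exact: inv_succ_pos.
  by move=> z Hz; apply: Rnot_le_lt => Hle; apply: Hk; exists z.
case: (choice_seq _ _ Hk) => y Hy.
have Hcv : vcv y x.
  move=> e' He'; case: (inv_succ_small _ He') => N HN; exists N => k Hk'.
  rewrite /Rdist Rminus_0_r Rabs_right; last exact/Rle_ge/vnorm_pos.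
  by have := HN k Hk'; have := proj1 (Hy k); lra.
case: (H y Hcv e He) => N HN; have := HN N (le_n N); have := proj2 (Hy N); rewrite /Rdist; lra.
Qed.

Lemma dot_cv y1 y2 x1 x2 : vcv y1 x1 -> vcv y2 x2 ->
  Un_cv (fun k => dot (y1 k) (y2 k)) (dot x1 x2).
Proof.
move=> H1 H2; apply: (lsum_cv _ (fun k i => y1 k i * y2 k i)) => i.
by apply: CV_mult; exact: vcv_coord.
Qed.

Lemma vadd_cv y1 y2 x1 x2 : vcv y1 x1 -> vcv y2 x2 ->
  vcv (fun k => vadd (y1 k) (y2 k)) (vadd x1 x2).
Proof. by move=> H1 H2; apply: coord_vcv => i; apply: CV_plus; exact: vcv_coord. Qed.

Lemma vscale_cv (c : nat -> R) y C x : Un_cv c C -> vcv y x ->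
  vcv (fun k => vscale (c k) (y k)) (vscale C x).
Proof. by move=> Hc H; apply: coord_vcv => i; apply: CV_mult => //; exact: vcv_coord. Qed.

Lemma vnorm_cv y x : vcv y x -> Un_cv (fun k => vnorm (y k)) (vnorm x).
Proof.
move=> H; apply/Un_cv_dist; apply: (squeeze _ _ 0%nat _ H) => k _; split; first exact: Rabs_pos.
have h1 := vnorm_triang_sub (y k) x vzero; have h2 := vnorm_triang_sub x (y k) vzero.
rewrite !vsub_zero (vnorm_sub_sym x) in h1 h2; apply: Rabs_le; lra.
Qed.

Lemma norm_band_closed (a b : R) y x :
  (forall k, a <= vnorm (y k) <= b) -> vcv y x -> a <= vnorm x <= b.
Proof.
move=> H Hx; have Hc := vnorm_cv _ _ Hx.
by split; [exact: (cv_ge_bound _ _ _ (fun k => proj1 (H k)) Hc) | exact: (cv_le_bound _ _ _ (fun k => proj2 (H k)) Hc)].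
Qed.

Lemma level_band_closed (g : vec n -> R) (a b : R) y x :
  seq_cont_at g x -> (forall k, a <= g (y k) <= b) -> vcv y x -> a <= g x <= b.
Proof.
move=> Hg H Hx; have Hc := Hg y Hx.
by split; [exact: (cv_ge_bound _ _ _ (fun k => proj1 (H k)) Hc) | exact: (cv_le_bound _ _ _ (fun k => proj2 (H k)) Hc)].
Qed.

End Sequences.

Definition incr (phi : nat -> nat) := forall k, (phi k < phi (S k))%coq_nat.

Lemma incr_ge phi : incr phi -> forall k, (k <= phi k)%coq_nat.
Proof. by move=> H; elim=> [|k IH]; [lia | have := H k; lia]. Qed.

Lemma incr_strict phi : incr phi -> forall a b, (a < b)%coq_nat -> (phi a < phi b)%coq_nat.
Proof.
move=> H a; elim=> [|b IH] Hab; first lia.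
case: (Nat.eq_dec a b) => [->|Hne]; first exact: H.
by have := IH ltac:(lia); have := H b; lia.
Qed.

Lemma incr_comp phi psi : incr phi -> incr psi -> incr (fun k => phi (psi k)).
Proof. by move=> H1 H2 k; apply: incr_strict. Qed.

Lemma Un_cv_sub (u : nat -> R) l phi : incr phi -> Un_cv u l -> Un_cv (fun k => u (phi k)) l.
Proof.
move=> Hp Hu e He; case: (Hu e He) => N HN; exists N => k Hk; apply: HN.
by have := incr_ge phi Hp k; lia.
Qed.

Lemma io_subseq (P : nat -> nat -> Prop) :
  (forall m N, exists k, (N <= k)%coq_nat /\ P m k) ->
  exists phi, incr phi /\ forall m, P m (phi m).
Proof.
move=> H.
have H' (p : nat * nat) : exists k, (snd p <= k)%coq_nat /\ P (fst p) k by case: p; exact: H.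
pose pick p := proj1_sig (constructive_indefinite_description _ (H' p)).
have Hpick p : (snd p <= pick p)%coq_nat /\ P (fst p) (pick p)
  by exact: (proj2_sig (constructive_indefinite_description _ (H' p))).
pose phi := fix phi m := match m with O => pick (0%nat, 0%nat) | S m' => pick (S m', S (phi m')) end.
exists phi; split.
- by move=> k /=; have := proj1 (Hpick (S k, S (phi k))) => /=; lia.
- by case=> [|m]; [exact: (proj2 (Hpick (0%nat, 0%nat))) | exact: (proj2 (Hpick (S m, S (phi m))))].
Qed.

Lemma bolzano_weierstrass_interval (u : nat -> R) a b : (forall k, a <= u k <= b) ->
  exists phi l, incr phi /\ Un_cv (fun k => u (phi k)) l /\ a <= l <= b.
Proof.
move=> H; case: (Bolzano_Weierstrass u (fun c => a <= c <= b) (compact_P3 a b) H) => l Hl.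
have Hio m N : exists k, (N <= k)%coq_nat /\ Rabs (u k - l) < / (INR m + 1).
  case: (Hl (disc l (mkposreal _ (inv_succ_pos m))) N) => [|p [Hp Hv]]; last by exists p.
  by exists (mkposreal _ (inv_succ_pos m)) => z Hz.
case: (io_subseq _ Hio) => phi [Hphi Hp].
have Hcv : Un_cv (fun k => u (phi k)) l.
  move=> e He; case: (inv_succ_small _ He) => N HN; exists N => k Hk; rewrite /Rdist.
  by have := HN k Hk; have := Hp k; lra.
exists phi, l; split; [done | split; [done | split]].
- exact: (cv_ge_bound _ _ _ (fun k => proj1 (H (phi k))) Hcv).
- exact: (cv_le_bound _ _ _ (fun k => proj2 (H (phi k))) Hcv).
Qed.

Section Compactness.
Context {n : nat}.
Implicit Types (x : vec n) (y : nat -> vec n) (P : vec n -> Prop) (g : vec n -> R).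

Lemma vcv_sub y x phi : incr phi -> vcv y x -> vcv (fun k => y (phi k)) x.
Proof. exact: Un_cv_sub. Qed.

(* Bolzano-Weierstrass in R^n: extract coordinates one at a time. *)
Lemma bolzano_weierstrass_coords y R0 (s : seq 'I_n) : (forall k, vnorm (y k) <= R0) ->
  exists phi L, incr phi /\ forall i, i \in s -> Un_cv (fun k => y (phi k) i) (L i).
Proof.
move=> Hb; elim: s => [|i s [phi [L [Hphi HL]]]].
  by exists (fun k => k), vzero; split => // k; lia.
have Hbd k : - R0 <= y (phi k) i <= R0.
  have := coord_le (y (phi k)) i; have := Hb (phi k); have := Rle_abs (y (phi k) i).
  by have := Rle_abs (- y (phi k) i); rewrite Rabs_Ropp; lra.
case: (bolzano_weierstrass_interval _ _ _ Hbd) => psi [l [Hpsi [Hl _]]].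
exists (fun k => phi (psi k)), (fun j => if j == i then l else L j).
split; first exact: incr_comp.
move=> j; case E: (j == i); first by move/eqP: E => ->.
by rewrite in_cons E /= => Hj; exact: (Un_cv_sub _ _ _ Hpsi (HL j Hj)).
Qed.

Lemma bolzano_weierstrass y R0 : (forall k, vnorm (y k) <= R0) ->
  exists phi L, incr phi /\ vcv (fun k => y (phi k)) L.
Proof.
move=> Hb; case: (bolzano_weierstrass_coords _ _ (enum 'I_n) Hb) => phi [L [Hp HL]].
by exists phi, L; split => //; apply: coord_vcv => i; apply: HL; rewrite mem_enum.
Qed.

Definition seq_closed P := forall y x, (forall k, P (y k)) -> vcv y x -> P x.
Definition bounded_by P R0 := forall x, P x -> vnorm x <= R0.

Lemma closed_bounded_cluster P R0 y : seq_closed P -> bounded_by P R0 -> (forall k, P (y k)) ->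
  exists phi x, incr phi /\ vcv (fun k => y (phi k)) x /\ P x.
Proof.
move=> Hc Hb Hy; case: (bolzano_weierstrass y R0 (fun k => Hb _ (Hy k))) => phi [x [Hphi Hx]].
by exists phi, x; split; [| split]; last exact: (Hc _ _ (fun k => Hy (phi k)) Hx).
Qed.

Lemma positive_min_on_compact P g R0 : seq_closed P -> bounded_by P R0 ->
  (forall x, P x -> seq_cont_at g x) -> (forall x, P x -> 0 < g x) ->
  exists c, 0 < c /\ forall x, P x -> c <= g x.
Proof.
move=> Hc Hb Hg Hp; apply: NNPP => Hn.
have Hk k : exists x, P x /\ g x < / (INR k + 1).
  apply: NNPP => Hk; apply: Hn; exists (/ (INR k + 1)); split; first exact: inv_succ_pos.
  by move=> x Px; apply: Rnot_lt_le => Hlt; apply: Hk; exists x.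
case: (choice_seq _ _ Hk) => y Hy.
case: (closed_bounded_cluster _ _ _ Hc Hb (fun k => proj1 (Hy k))) => phi [L [Hphi [HL PL]]].
have gL := Hp L PL.
case: (Hg L PL _ HL (g L / 2) ltac:(lra)) => N1 HN1.
case: (inv_succ_small (g L / 2) ltac:(lra)) => N2 HN2.
have h1 := HN1 (Nat.max N1 N2) ltac:(lia).
have h2 := HN2 (phi (Nat.max N1 N2)) ltac:(have := incr_ge phi Hphi (Nat.max N1 N2); lia).
have h3 := proj2 (Hy (phi (Nat.max N1 N2))).
by rewrite /Rdist in h1; move/Rabs_def2: h1; lra.
Qed.

Lemma bounded_on_compact P g R0 : seq_closed P -> bounded_by P R0 ->
  (forall x, P x -> seq_cont_at g x) -> exists M, forall x, P x -> g x <= M.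
Proof.
move=> Hc Hb Hg; apply: NNPP => Hn.
have Hk k : exists x, P x /\ INR k < g x.
  apply: NNPP => Hk; apply: Hn; exists (INR k).
  by move=> x Px; apply: Rnot_lt_le => Hlt; apply: Hk; exists x.
case: (choice_seq _ _ Hk) => y Hy.
case: (closed_bounded_cluster _ _ _ Hc Hb (fun k => proj1 (Hy k))) => phi [L [Hphi [HL PL]]].
case: (Hg L PL _ HL 1 Rlt_0_1) => N1 HN1.
case: (INR_unbounded (g L + 1)) => m Hm.
have h1 := HN1 (Nat.max N1 m) ltac:(lia).
have h2 : INR m <= INR (phi (Nat.max N1 m))
  by apply: le_INR; have := incr_ge phi Hphi (Nat.max N1 m); lia.
have h3 := proj2 (Hy (phi (Nat.max N1 m))).
by rewrite /Rdist in h1; move/Rabs_def2: h1; lra.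
Qed.

End Compactness.

Section Regularity.
Context {n : nat}.
Implicit Types (x v : vec n).

Lemma loc_lipschitz_seq_cont (f : vec n -> vec n) x : loc_lipschitz f -> seq_vcont_at f x.
Proof.
move=> Hf y Hy; case: (Hf x) => e [L [He [HL Hlip]]]; case: (Hy e He) => N HN.
apply: (squeeze _ (fun k => L * vnorm (vsub (y k) x)) N).
- move=> k Hk; split; first exact: vnorm_pos.
  apply: Hlip; last by rewrite vsub_diag vnorm_zero.
  have := HN k Hk; rewrite /Rdist Rminus_0_r Rabs_right //; exact/Rle_ge/vnorm_pos.
- by rewrite -(Rmult_0_r L); apply: CV_mult => //; exact: CV_const.
Qed.

Lemma gradient_cont (F : vec n -> R) G x : has_gradient F G -> cont_at F x.
Proof.
move=> HF e He; case: (HF x 1 Rlt_0_1) => d [Hd H1].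
pose K := vnorm (G x) + 1.
have HK : 0 < K by have := vnorm_pos (G x); rewrite /K; lra.
exists (Rmin d (e / K)); split; first by apply: Rmin_pos; [lra | apply: Rdiv_lt_0_compat; lra].
move=> y Hy.
have Hy1 : vnorm (vsub y x) < d by have := Rmin_l d (e / K); lra.
have Hy2 : vnorm (vsub y x) * K < e.
  have := Rmin_r d (e / K) => ?; apply: (Rmult_lt_reg_r (/ K)); first exact: Rinv_0_lt_compat.
  by rewrite Rmult_assoc Rinv_r; lra.
have h1 := H1 y Hy1; have h2 := cauchy_schwarz (G x) (vsub y x).
have hp := vnorm_pos (vsub y x); have hg := vnorm_pos (G x).
have h3 : Rabs (F y - F x) <= Rabs (F y - F x - dot (G x) (vsub y x)) + Rabs (dot (G x) (vsub y x)).
  have {1}-> : F y - F x = (F y - F x - dot (G x) (vsub y x)) + dot (G x) (vsub y x) by ring.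
  exact: Rabs_triang.
rewrite /K in Hy2; nra.
Qed.

Lemma coords_seq_vcont (F : vec n -> vec n) x :
  (forall i, seq_cont_at (fun y => F y i) x) -> seq_vcont_at F x.
Proof. by move=> H y Hy; apply: coord_vcv => i; exact: H. Qed.

End Regularity.

Lemma nonincreasing_of_nonpos_derivative F F' a b : a <= b ->
  (forall c, a <= c <= b -> derivable_pt_lim F c (F' c)) ->
  (forall c, a <= c <= b -> F' c <= 0) -> F b <= F a.
Proof.
move=> Hab HD Hs; case: (Rle_lt_or_eq_dec a b Hab) => [Hlt|->]; last lra.
case: (MVT_cor2 F F' a b Hlt HD) => c [Hc Hcab].
by have := Hs c ltac:(lra); nra.
Qed.

Lemma derivable_pt_lim_eq f x l l' : derivable_pt_lim f x l -> l = l' -> derivable_pt_lim f x l'.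
Proof. by move=> H <-. Qed.

Lemma second_order_bound (g1 g2 g3 : R -> R) M s : 0 <= s ->
  (forall c, 0 <= c <= s -> derivable_pt_lim g1 c (g2 c)) ->
  (forall c, 0 <= c <= s -> derivable_pt_lim g2 c (g3 c)) ->
  (forall c, 0 <= c <= s -> g3 c <= M) ->
  g1 s <= g1 0 + s * g2 0 + s * s / 2 * M.
Proof.
move=> Hs D1 D2 HM.
pose k u := g2 u - g2 0 - u * M.
have Dk c : 0 <= c <= s -> derivable_pt_lim k c (g3 c - M).
  move=> Hc; apply: (derivable_pt_lim_eq _ _ ((g3 c - 0) - 1 * M)); last ring.
  apply: (derivable_pt_lim_minus (fun u => g2 u - g2 0) (fun u => u * M)).
  - by apply: (derivable_pt_lim_minus g2 (fun _ => g2 0)); [exact: D2 | exact: derivable_pt_lim_const].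
  - by apply: (derivable_pt_lim_scal_right id); exact: derivable_pt_lim_id.
have Hk t : 0 <= t <= s -> k t <= 0.
  move=> Ht; have -> : 0 = k 0 by rewrite /k; ring.
  apply: (nonincreasing_of_nonpos_derivative k (fun c => g3 c - M)) => [|c Hc|c Hc]; try lra.
  - by apply: Dk; lra.
  - by have := HM c ltac:(lra); lra.
pose h u := g1 u - g1 0 - u * g2 0 - u * u / 2 * M.
have Dh c : 0 <= c <= s -> derivable_pt_lim h c (k c).
  move=> Hc; apply: (derivable_pt_lim_eq _ _ ((g2 c - 0) - 1 * g2 0 - (1 * c + c * 1) / 2 * M));
    last by rewrite /k; field.
  apply: (derivable_pt_lim_minus (fun u => g1 u - g1 0 - u * g2 0) (fun u => u * u / 2 * M)).
  - apply: (derivable_pt_lim_minus (fun u => g1 u - g1 0) (fun u => u * g2 0)).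
    + by apply: (derivable_pt_lim_minus g1 (fun _ => g1 0)); [exact: D1 | exact: derivable_pt_lim_const].
    + by apply: (derivable_pt_lim_scal_right id); exact: derivable_pt_lim_id.
  - apply: (derivable_pt_lim_eq _ _ ((1 * c + c * 1) * / 2 * M)); last field.
    apply: (derivable_pt_lim_scal_right (fun u => u * u / 2)).
    apply: (derivable_pt_lim_scal_right (fun u => u * u)).
    by apply: (derivable_pt_lim_mult id id); exact: derivable_pt_lim_id.
have : h s <= h 0 by apply: (nonincreasing_of_nonpos_derivative h k 0 s Hs Dh).
by rewrite /h; lra.
Qed.

Section TaylorAlongLines.
Context {n : nat}.
Implicit Types (x v : vec n).

Lemma line_shift x v t h : vsub (vadd x (vscale (t + h) v)) (vadd x (vscale t v)) = vscale h v.
Proof. by apply: functional_extensionality => i; rewrite /vsub /vadd /vscale; ring. Qed.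

Lemma line_at_0 x v : vadd x (vscale 0 v) = x.
Proof. by apply: functional_extensionality => i; rewrite /vadd /vscale; ring. Qed.

Lemma gradient_along_line (F : vec n -> R) G x v t : has_gradient F G ->
  derivable_pt_lim (fun s => F (vadd x (vscale s v))) t (dot (G (vadd x (vscale t v))) v).
Proof.
move=> HF eps Heps; set z := vadd x (vscale t v); pose K := vnorm v + 1.
have Hv := vnorm_pos v.
have HK : 0 < K by rewrite /K; lra.
case: (HF z (eps / (2 * K))) => [|d [Hd Hz]]; first by apply: Rdiv_lt_0_compat; lra.
have Hdel : 0 < d / K by apply: Rdiv_lt_0_compat.
exists (mkposreal _ Hdel) => h Hh0 /= Hh.
have Hsub := line_shift x v t h; rewrite -/z in Hsub.
have Hn : vnorm (vsub (vadd x (vscale (t + h) v)) z) < d.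
  rewrite Hsub vnorm_scale; have := Rabs_pos h.
  have : Rabs h * K < d.
    apply: (Rmult_lt_reg_r (/ K)); first exact: Rinv_0_lt_compat.
    by rewrite Rmult_assoc Rinv_r; lra.
  by rewrite /K; nra.
have H1 := Hz _ Hn; rewrite Hsub vnorm_scale dot_scalr in H1.
set A := F (vadd x (vscale (t + h) v)) - F z - h * dot (G z) v in H1.
have -> : (F (vadd x (vscale (t + h) v)) - F z) / h - dot (G z) v = A * / h
  by rewrite /A; field.
rewrite Rabs_mult Rabs_inv.
have Hah : 0 < Rabs h by apply: Rabs_pos_lt.
have h2 : Rabs A * / Rabs h <= eps / (2 * K) * vnorm v.
  apply: (Rmult_le_reg_r (Rabs h)) => //; rewrite Rmult_assoc Rinv_l; [nra | lra].
have h3 : eps / (2 * K) * vnorm v < eps.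
  have -> : eps / (2 * K) * vnorm v = eps * (vnorm v / (2 * K)) by field; lra.
  have : vnorm v / (2 * K) < 1.
    apply: (Rmult_lt_reg_r (2 * K)); first lra.
    have -> : vnorm v / (2 * K) * (2 * K) = vnorm v by field; lra.
    by rewrite /K; lra.
  have : 0 <= vnorm v / (2 * K) by apply: Rmult_le_pos; [lra | apply/Rlt_le/Rinv_0_lt_compat; lra].
  nra.
lra.
Qed.

Lemma lsum_derive (s : seq 'I_n) (F : R -> 'I_n -> R) F' t :
  (forall i, derivable_pt_lim (fun u => F u i) t (F' i)) ->
  derivable_pt_lim (fun u => lsum s (F u)) t (lsum s F').
Proof.
move=> H; elim: s => [|a s IH]; first exact: derivable_pt_lim_const.
exact: (derivable_pt_lim_plus (fun u => F u a) (fun u => lsum s (F u)) t _ _ (H a) IH).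
Qed.

Lemma hessian_along_line (gV : vec n -> vec n) HV x v t :
  (forall i, has_gradient (fun y => gV y i) (fun y => HV y i)) ->
  derivable_pt_lim (fun s => dot (gV (vadd x (vscale s v))) v) t
    (quadform (HV (vadd x (vscale t v))) v).
Proof.
move=> H.
apply: (derivable_pt_lim_eq _ _ (lsum (enum 'I_n) (fun i => dot (HV (vadd x (vscale t v)) i) v * v i))).
- apply: (lsum_derive _ (fun u i => gV (vadd x (vscale u v)) i * v i)) => i.
  apply: (derivable_pt_lim_scal_right (fun u => gV (vadd x (vscale u v)) i)).
  exact: (gradient_along_line (fun y => gV y i) (fun y => HV y i) x v t (H i)).
- by rewrite /quadform dot_lsum; apply: lsum_ext => i; ring.
Qed.

Lemma taylor_along_line (V : vec n -> R) gV HV x v s M :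
  has_gradient V gV -> (forall i, has_gradient (fun y => gV y i) (fun y => HV y i)) -> 0 <= s ->
  (forall th, 0 <= th <= s -> quadform (HV (vadd x (vscale th v))) v <= M) ->
  V (vadd x (vscale s v)) <= V x + s * dot (gV x) v + s * s / 2 * M.
Proof.
move=> HV1 HV2 Hs HM.
have := second_order_bound (fun u => V (vadd x (vscale u v))) (fun u => dot (gV (vadd x (vscale u v))) v)
  (fun u => quadform (HV (vadd x (vscale u v))) v) M s Hs
  (fun c _ => gradient_along_line V gV x v c HV1) (fun c _ => hessian_along_line gV HV x v c HV2) HM.
by rewrite line_at_0.
Qed.

End TaylorAlongLines.

Section ParametricMax.
Context {n : nat}.
Variables (G : vec n -> R -> R) (r : R) (q : vec n -> R).
Hypothesis G_cont : forall y x (h : nat -> R) hh,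
  vcv y x -> Un_cv h hh -> Un_cv (fun k => G (y k) (h k)) (G x hh).
Hypothesis q_max : forall x, is_max (fun s => exists h, 0 <= h <= r /\ s = G x h) (q x).

Lemma max_lower_semicont y x e : vcv y x -> 0 < e ->
  exists N, forall k, (k >= N)%coq_nat -> q x - e < q (y k).
Proof.
move=> Hy He; case: (proj1 (q_max x)) => hx [Hhx Eq].
have Hl := G_cont y x (fun _ => hx) hx Hy (CV_const hx); rewrite -Eq in Hl.
case: (Hl e He) => N HN; exists N => k Hk.
have h1 := HN k Hk; rewrite /Rdist in h1; move/Rabs_def2: h1 => h1.
have : G (y k) hx <= q (y k) by apply: (proj2 (q_max (y k))); exists hx.
lra.
Qed.

(* Upper semicontinuity: if q (y k) >= q x + e infinitely often, a maximizing
   parameter of a subsequence would converge to some l in [0, r] with G x l > q x. *)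
Lemma max_upper_semicont y x e : vcv y x -> 0 < e ->
  exists N, forall k, (k >= N)%coq_nat -> q (y k) < q x + e.
Proof.
move=> Hy He; apply: NNPP => Hn.
have Hio (m N : nat) : exists k, (N <= k)%coq_nat /\ q x + e <= q (y k).
  apply: NNPP => H; apply: Hn; exists N => k Hk; apply: Rnot_le_lt => H2; apply: H; exists k; split; [lia | done].
case: (io_subseq _ Hio) => psi [Hpsi Hp].
case: (choice_seq _ _ (fun k => proj1 (q_max (y (psi k))))) => hs Hhs.
case: (bolzano_weierstrass_interval hs 0 r (fun k => proj1 (Hhs k))) => chi [l [Hchi [Hcl Hl0r]]].
have Hy2 : vcv (fun k => y (psi (chi k))) x := vcv_sub _ _ _ Hchi (vcv_sub _ _ _ Hpsi Hy).
have HG := G_cont _ x _ l Hy2 Hcl.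
have Hle : G x l <= q x by apply: (proj2 (q_max x)); exists l.
have Hge : q x + e <= G x l.
  by apply: (cv_ge_bound _ _ _ _ HG) => k /=; rewrite -(proj2 (Hhs (chi k))); exact: Hp.
lra.
Qed.

Lemma max_over_interval_cont x : seq_cont_at q x.
Proof.
move=> y Hy e He.
case: (max_lower_semicont _ _ _ Hy He) => N1 HN1; case: (max_upper_semicont _ _ _ Hy He) => N2 HN2.
exists (Nat.max N1 N2) => k Hk; rewrite /Rdist.
by have := HN1 k ltac:(lia); have := HN2 k ltac:(lia); move=> *; apply: Rabs_def1; lra.
Qed.

End ParametricMax.

Arguments max_over_interval_cont {n G r q}.

Lemma euler_quadform_cont {n} {f : vec n -> vec n} {HV : vec n -> 'I_n -> vec n} {y x h hh} :
  loc_lipschitz f -> (forall i j, vcont (fun z => HV z i j)) -> vcv y x -> Un_cv h hh ->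
  Un_cv (fun k => quadform (HV (vadd (y k) (vscale (h k) (f (y k))))) (f (y k)))
        (quadform (HV (vadd x (vscale hh (f x)))) (f x)).
Proof.
move=> Hf Hc Hy Hh; have Hfy := loc_lipschitz_seq_cont _ x Hf y Hy.
have Hw := vadd_cv _ _ _ _ Hy (vscale_cv _ _ _ _ Hh Hfy).
rewrite /quadform; apply: dot_cv => //; apply: coord_vcv => i; apply: dot_cv => //.
by apply: coord_vcv => j; exact: (seq_cont_of_cont _ _ (Hc i j _) _ Hw).
Qed.

Lemma exp_neg_le1 a : 0 <= a -> exp (- a) <= 1.
Proof.
move=> Ha; rewrite -exp_0; case: (Req_dec a 0) => [->|Hne]; first by rewrite Ropp_0; lra.
by apply/Rlt_le/exp_increasing; lra.
Qed.

Section EulerTrajectories.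
Context {n : nat}.
Variables (phi : vec n -> R) (f : vec n -> vec n) (u : R -> R) (x0 : vec n).
Hypothesis u_nonneg : forall t, 0 <= t -> 0 <= u t.
Hypothesis phi_pos : forall x, 0 < phi x.

Local Notation tau i := (fst (hstate phi f u x0 i)).
Local Notation xs i := (snd (hstate phi f u x0 i)).

Lemma hstate_S i :
  hstate phi f u x0 (S i) =
  (tau i + phi (xs i) * exp (- u (tau i)),
   vadd (xs i) (vscale (phi (xs i) * exp (- u (tau i))) (f (xs i)))).
Proof. by rewrite /=; case: (hstate phi f u x0 i). Qed.

Lemma tau_nonneg i : 0 <= tau i.
Proof.
elim: i => [|i IH]; first by rewrite /=; lra.
rewrite hstate_S /=; have := phi_pos (xs i); have := exp_pos (- u (tau i)); nra.
Qed.

Lemma euler_step i :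
  0 < tau (S i) - tau i <= phi (xs i) /\
  xs (S i) = vadd (xs i) (vscale (tau (S i) - tau i) (f (xs i))).
Proof.
have Ht := tau_nonneg i; rewrite hstate_S /=.
have := phi_pos (xs i); have := exp_neg_le1 _ (u_nonneg _ Ht); have := exp_pos (- u (tau i)).
move=> *; split; first by split; nra.
by congr vadd; congr vscale; ring.
Qed.

Lemma solution_on_segment t y : sol_at phi f u x0 t y ->
  exists i s, 0 <= s <= phi (xs i) /\ t = tau i + s /\ y = vadd (xs i) (vscale s (f (xs i))).
Proof.
case=> i [Ht ->]; have [Hstep _] := euler_step i.
by exists i, (t - tau i); split; [lra | split; [ring | done]].
Qed.

End EulerTrajectories.

Arguments tau_nonneg {n phi f u x0} phi_pos i.
Arguments euler_step {n phi f u x0} u_nonneg phi_pos i.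
Arguments solution_on_segment {n phi f u x0} u_nonneg phi_pos {t y}.

Section LyapunovLevelSets.
Context {n : nat}.
Variables (f : vec n -> vec n) (V : vec n -> R) (gV : vec n -> vec n).
Hypothesis V_lyap : lyapunov f V gV.
Hypothesis V_cont : forall x, seq_cont_at V x.

Lemma V_bounded_on_balls R0 : exists M, forall x, vnorm x <= R0 -> V x <= M.
Proof.
case: (bounded_on_compact (fun y => 0 <= vnorm y <= R0) V R0) => [||x _|M HM].
- by move=> y x Hy Hx; exact: (norm_band_closed _ _ _ _ Hy Hx).
- by move=> x Hx; lra.
- exact: V_cont.
- by exists M => x Hx; apply: HM; have := vnorm_pos x; lra.
Qed.

Lemma V_positive_off_balls eps : 0 < eps ->
  exists b, 0 < b /\ forall y, eps <= vnorm y -> b <= V y.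
Proof.
case: V_lyap => HV0 [Hpos [Hrad _]] He; case: (Hrad 1) => R1 HR1.
case: (positive_min_on_compact (fun y => eps <= vnorm y <= R1) V R1) => [||x _|x Hx|c [Hc0 Hc1]].
- by move=> y x Hy Hx; exact: (norm_band_closed _ _ _ _ Hy Hx).
- by move=> x Hx; lra.
- exact: V_cont.
- by apply: Hpos => Hx0; rewrite Hx0 vnorm_zero in Hx; lra.
- exists (Rmin c 1); split; first by apply: Rmin_pos; lra.
  move=> y Hy; case: (Rle_lt_dec R1 (vnorm y)) => H.
  + by have := HR1 y H; have := Rmin_r c 1; lra.
  + by have := Hc1 y ltac:(lra); have := Rmin_l c 1; lra.
Qed.

Lemma decay_rate_on_bands b M0 :
  (forall x, seq_cont_at (fun y => dot (gV y) (f y)) x) -> 0 < b ->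
  exists c, 0 < c /\ forall y, b <= V y <= M0 -> dot (gV y) (f y) <= - c.
Proof.
case: V_lyap => HV0 [Hpos [Hrad HD]] HDc Hb; case: (Hrad (M0 + 1)) => R1 HR1.
case: (positive_min_on_compact (fun y => b <= V y <= M0) (fun y => - dot (gV y) (f y)) R1)
  => [||x _ y Hy|x Hx|c [Hc0 Hc1]].
- by move=> y x Hy Hx; exact: (level_band_closed _ _ _ _ _ (V_cont x) Hy Hx).
- by move=> x Hx; apply: Rnot_lt_le => H; have := HR1 x ltac:(lra); lra.
- exact: (CV_opp _ _ (HDc x y Hy)).
- have Hx0 : x <> vzero by move=> E; rewrite E HV0 in Hx; lra.
  by have := HD x Hx0; lra.
- by exists c; split => // y Hy; have := Hc1 y Hy; lra.
Qed.

End LyapunovLevelSets.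

Arguments V_bounded_on_balls {n V} V_cont R0.
Arguments V_positive_off_balls {n f V gV} V_lyap V_cont {eps}.
Arguments decay_rate_on_bands {n f V gV} V_lyap V_cont b M0.

Section DescentImpliesURGAS.
Context {n : nat}.
Variables (f : vec n -> vec n) (V : vec n -> R) (gV : vec n -> vec n) (phi : vec n -> R) (lam : R).
Hypothesis V_lyap : lyapunov f V gV.
Hypothesis V_cont : forall x, seq_cont_at V x.
Hypothesis D_cont : forall x, seq_cont_at (fun y => dot (gV y) (f y)) x.
Hypothesis lam_pos : 0 < lam.
Hypothesis phi_pos : forall x, 0 < phi x.
Hypothesis D_nonpos : forall x, dot (gV x) (f x) <= 0.
Hypothesis descent : forall x s, 0 <= s <= phi x ->
  V (vadd x (vscale s (f x))) <= V x + s * lam * dot (gV x) (f x).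

Local Notation tau u x0 i := (fst (hstate phi f u x0 i)).
Local Notation xs u x0 i := (snd (hstate phi f u x0 i)).

Lemma V_nonincreasing_on_segments {x s} : 0 <= s <= phi x -> V (vadd x (vscale s (f x))) <= V x.
Proof.
move=> Hs; have := descent _ _ Hs; have := D_nonpos x.
have : 0 <= s * lam by apply: Rmult_le_pos; lra.
nra.
Qed.

Lemma V_nonincreasing_on_solutions {u x0 t y} : admissible_input u ->
  sol_at phi f u x0 t y -> V y <= V x0.
Proof.
case=> Hu _ Hsol; case: (solution_on_segment Hu phi_pos Hsol) => i [s [Hs [_ ->]]].
apply: (Rle_trans _ _ _ (V_nonincreasing_on_segments Hs)).
elim: i {Hs} => [|i IH]; first exact: Rle_refl.
have [Hstep ->] := euler_step (f := f) (x0 := x0) Hu phi_pos i.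
by apply: (Rle_trans _ (V (xs u x0 i))) => //; apply: V_nonincreasing_on_segments; lra.
Qed.

(* Uniform stability: small initial states keep V, hence the norm, small. *)
Lemma urgas_stable : forall eps, 0 < eps -> exists d, 0 < d /\
  forall x0 u t y, admissible_input u -> vnorm x0 < d -> 0 <= t ->
    sol_at phi f u x0 t y -> vnorm y < eps.
Proof.
move=> eps He; case: (V_positive_off_balls V_lyap V_cont He) => b [Hb HbV].
case: (cont_of_seq_cont _ _ (V_cont vzero) _ Hb) => d [Hd Hdd]; exists d; split => //.
move=> x0 u t y Hu Hx0 _ Hsol; have Hy := V_nonincreasing_on_solutions Hu Hsol.
have := Hdd x0 ltac:(by rewrite vsub_zero); rewrite (proj1 V_lyap) Rminus_0_r => Habs.
have Hle := Rle_abs (V x0); apply: Rnot_le_lt => Hn; have := HbV y Hn; lra.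
Qed.

(* Uniform boundedness: V is bounded on the initial ball and radially unbounded. *)
Lemma urgas_bounded : forall Rr, 0 <= Rr -> exists M,
  forall x0 u t y, admissible_input u -> vnorm x0 <= Rr -> 0 <= t ->
    sol_at phi f u x0 t y -> vnorm y <= M.
Proof.
move=> Rr _; case: (V_bounded_on_balls V_cont Rr) => M0 HM0.
case: (proj1 (proj2 (proj2 V_lyap)) (M0 + 1)) => R1 HR1; exists R1.
move=> x0 u t y Hu Hx0 _ Hsol; have Hy := V_nonincreasing_on_solutions Hu Hsol.
have := HM0 x0 Hx0 => HVx0; apply: Rnot_lt_le => Hn; have := HR1 y ltac:(lra); lra.
Qed.

Section Attractivity.
Variables (b c M0 : R).
Hypothesis c_pos : 0 < c.
Hypothesis decay_band : forall y, b <= V y <= M0 -> dot (gV y) (f y) <= - c.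

(* While V stays above b, it decays at least linearly in time along the solution. *)
Definition decayed (z : vec n) (t : R) := V z < b \/ V z <= M0 - lam * c * t.

Lemma decayed_segment {x t s} : 0 <= t -> decayed x t -> 0 <= s <= phi x ->
  decayed (vadd x (vscale s (f x))) (t + s).
Proof.
move=> Ht Hx Hs; have Hdesc := descent _ _ Hs; have Hmono := V_nonincreasing_on_segments Hs.
have Hlc : 0 <= lam * c * t by apply: Rmult_le_pos => //; apply: Rmult_le_pos; lra.
have Hsl : 0 <= s * lam by apply: Rmult_le_pos; lra.
case: (Rlt_le_dec (V x) b) => [Hlt|Hge]; first by left; lra.
rewrite /decayed in Hx *; case: Hx => [Hlt|Hx]; first lra.
have HVM : V x <= M0 by lra.
have HDx := decay_band x (conj Hge HVM); right; nra.
Qed.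

Lemma decayed_solution {u x0 t y} : admissible_input u -> V x0 <= M0 ->
  sol_at phi f u x0 t y -> decayed y t.
Proof.
case=> Hu _ Hx0 Hsol; case: (solution_on_segment Hu phi_pos Hsol) => i [s [Hs [-> ->]]].
apply: decayed_segment => //; first exact: (tau_nonneg phi_pos).
elim: i {Hs} => [|i IH]; first by right; rewrite /=; lra.
have [Hstep ->] := euler_step (f := f) (x0 := x0) Hu phi_pos i.
have Hnext := @decayed_segment _ _ (tau u x0 (S i) - tau u x0 i) (tau_nonneg phi_pos i) IH.
by rewrite Rplus_minus in Hnext; apply: Hnext; lra.
Qed.

End Attractivity.

(* Uniform attractivity: after time M0 / (lam c) every solution from the ball
   of radius Rr has entered the sublevel set {V < b} inside the eps-ball. *)
Lemma urgas_attractive : forall eps Rr, 0 < eps -> 0 <= Rr -> exists T,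
  forall x0 u t y, admissible_input u -> vnorm x0 <= Rr -> T <= t ->
    sol_at phi f u x0 t y -> vnorm y <= eps.
Proof.
move=> eps Rr He _; case: (V_positive_off_balls V_lyap V_cont He) => b [Hb HbV].
case: (V_bounded_on_balls V_cont Rr) => M0 HM0.
case: (decay_rate_on_bands V_lyap V_cont b M0 D_cont Hb) => c [Hc HcD].
exists (Rmax 0 (M0 / (lam * c))) => x0 u t y Hu Hx0 HT Hsol.
have Hlc : 0 < lam * c by apply: Rmult_lt_0_compat.
have HM0t : M0 - lam * c * t <= 0.
  have Ht : M0 / (lam * c) <= t by have := Rmax_r 0 (M0 / (lam * c)); lra.
  have : M0 <= t * (lam * c).
    apply: (Rmult_le_reg_r (/ (lam * c))); first exact: Rinv_0_lt_compat.
    by rewrite Rmult_assoc Rinv_r ?Rmult_1_r; lra.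
  lra.
have Hdec := decayed_solution b c M0 Hc HcD Hu (HM0 x0 Hx0) Hsol.
apply: Rnot_lt_le => Hn; have := HbV y (Rlt_le _ _ Hn); case: Hdec; lra.
Qed.

Lemma urgas_of_descent : URGAS phi f.
Proof. by split; [exact: urgas_stable | split; [exact: urgas_bounded | exact: urgas_attractive]]. Qed.

End DescentImpliesURGAS.

Arguments urgas_of_descent {n f V gV phi lam}.

Lemma lyapunov_derivative_nonpos {n} {f : vec n -> vec n} {V gV} :
  f vzero = vzero -> lyapunov f V gV -> forall x, dot (gV x) (f x) <= 0.
Proof.
move=> Hf0 [_ [_ [_ HL]]] x; case: (classic (x = vzero)) => [->|Hx].
- by rewrite Hf0 dot_comm dot_zerol; lra.
- by have := HL x Hx; lra.
Qed.

Lemma euler_gain_inequality D q p s lam : D <= 0 -> lam <= 1 -> 0 <= s <= p ->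
  p * q <= - 2 * (1 - lam) * D -> s * D + s * s / 2 * q <= s * lam * D.
Proof.
move=> HD Hlam Hs Hpq.
have h0 : 0 <= s * (1 - lam) by apply: Rmult_le_pos; lra.
case: (Rle_lt_dec q 0) => Hq.
- have : 0 <= s * s / 2 by nra.
  nra.
- have h1 : s * s / 2 * q <= s * p * q / 2.
    have : 0 <= (p - s) * s by apply: Rmult_le_pos; lra.
    nra.
  have h2 : s * (p * q) <= s * (- 2 * (1 - lam) * D) by apply: Rmult_le_compat_l; lra.
  nra.
Qed.

Lemma euler_descent {n} {f : vec n -> vec n} {V gV HV r q lam phi} :
  has_gradient V gV -> (forall i, has_gradient (fun y => gV y i) (fun y => HV y i)) ->
  (forall x h, 0 <= h <= r -> quadform (HV (vadd x (vscale h (f x)))) (f x) <= q x) ->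
  lam <= 1 -> (forall x, 0 < phi x <= r) -> (forall x, dot (gV x) (f x) <= 0) ->
  (forall x, phi x * q x <= - 2 * (1 - lam) * dot (gV x) (f x)) ->
  forall x s, 0 <= s <= phi x -> V (vadd x (vscale s (f x))) <= V x + s * lam * dot (gV x) (f x).
Proof.
move=> HV1 HV2 Hq Hlam Hp HD Hpq x s Hs.
have Hpx := Hp x.
have T := taylor_along_line V gV HV x (f x) s (q x) HV1 HV2 (proj1 Hs)
  (fun th Hth => Hq x th ltac:(lra)).
have := euler_gain_inequality _ _ _ _ _ (HD x) Hlam Hs (Hpq x); lra.
Qed.

Section StepSize.
Context {n : nat}.
Variables (f : vec n -> vec n) (gV : vec n -> vec n) (q : vec n -> R) (delta rho lam : R).

(* The explicit step-size bound: delta near 0 (fading out at radius rho), plus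
   a term proportional to -gradV.f / (1 + q+) that is positive away from 0;
   capped at delta. *)
Definition step_size (x : vec n) : R :=
  Rmin delta (delta * Rmax 0 (1 - vnorm x / rho) +
              (- 2 * (1 - lam) * dot (gV x) (f x)) / (Rmax 0 (q x) + 1)).

Hypothesis delta_pos : 0 < delta.
Hypothesis rho_pos : 0 < rho.
Hypothesis lam_lt1 : lam < 1.
Hypothesis D_nonpos : forall x, dot (gV x) (f x) <= 0.

Let gain_nonneg x : 0 <= - 2 * (1 - lam) * dot (gV x) (f x).
Proof. by have := D_nonpos x; nra. Qed.

Let denom_pos x : 0 < Rmax 0 (q x) + 1.
Proof. by have := Rmax_l 0 (q x); lra. Qed.

Lemma step_size_range : (forall x, x <> vzero -> dot (gV x) (f x) < 0) ->
  forall x, 0 < step_size x <= delta.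
Proof.
move=> HD x; rewrite /step_size; split; last exact: Rmin_l.
apply: Rmin_glb_lt => //.
have h1 : 0 <= (- 2 * (1 - lam) * dot (gV x) (f x)) / (Rmax 0 (q x) + 1)
  by apply: Rmult_le_pos; [exact: gain_nonneg | exact/Rlt_le/Rinv_0_lt_compat/denom_pos].
have h2 := Rmax_l 0 (1 - vnorm x / rho).
case: (Rlt_le_dec (vnorm x) rho) => Hx.
- have : vnorm x / rho < 1.
    by apply: (Rmult_lt_reg_r rho) => //; rewrite /Rdiv Rmult_assoc Rinv_l; lra.
  have := Rmax_r 0 (1 - vnorm x / rho); nra.
- have Hx0 : x <> vzero by move=> E; rewrite E vnorm_zero in Hx; lra.
  have Hg : 0 < - 2 * (1 - lam) * dot (gV x) (f x) by have := HD x Hx0; nra.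
  have := Rdiv_lt_0_compat _ _ Hg (denom_pos x); nra.
Qed.

Lemma step_size_cont : (forall x, seq_cont_at q x) ->
  (forall x, seq_cont_at (fun y => dot (gV y) (f y)) x) -> vcont step_size.
Proof.
move=> Hqc HDc x; apply: cont_of_seq_cont => y Hy; rewrite /step_size.
apply: (CV_min (fun _ => delta)); first exact: CV_const.
apply: CV_plus.
- apply: (CV_mult (fun _ => delta)); first exact: CV_const.
  apply: (CV_max (fun _ => 0)); first exact: CV_const.
  apply: (CV_minus (fun _ => 1)); first exact: CV_const.
  by apply: (CV_mult (fun k => vnorm (y k)) (fun _ => / rho)); [exact: vnorm_cv | exact: CV_const].
- apply: CV_mult.
  + by apply: (CV_mult (fun _ => - 2 * (1 - lam))); [exact: CV_const | exact: HDc].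
  + apply: CV_inv; last by have := denom_pos x; lra.
    apply: CV_plus; last exact: CV_const.
    by apply: (CV_max (fun _ => 0)); [exact: CV_const | exact: Hqc].
Qed.

(* The step size satisfies phi q <= -2 (1 - lam) gradV.f everywhere: near 0 by the
   hypothesis on delta, and away from 0 because then phi <= gain / (1 + q+). *)
Lemma step_size_condition : (forall x, vnorm x < rho -> delta * q x <= - 2 * (1 - lam) * dot (gV x) (f x)) ->
  (forall x, 0 < step_size x) ->
  forall x, step_size x * q x <= - 2 * (1 - lam) * dot (gV x) (f x).
Proof.
move=> Hnear Hpos x; have Hpx := Hpos x; have Hgx := gain_nonneg x.
rewrite /step_size in Hpx *.
set g := - 2 * (1 - lam) * dot (gV x) (f x) in Hgx Hpx *.
set T := delta * Rmax 0 (1 - vnorm x / rho) + g / (Rmax 0 (q x) + 1) in Hpx *.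
case: (Rle_lt_dec (q x) 0) => Hq0; first nra.
case: (Rlt_le_dec (vnorm x) rho) => Hx.
- by have := Hnear x Hx; rewrite -/g => Hn; have := Rmin_l delta T; nra.
- have Ha : Rmax 0 (1 - vnorm x / rho) = 0.
    apply: Rmax_left; suff : 1 <= vnorm x / rho by lra.
    by apply: (Rmult_le_reg_r rho) => //; rewrite /Rdiv Rmult_assoc Rinv_l; lra.
  have HT : T = g / (Rmax 0 (q x) + 1) by rewrite /T Ha; ring.
  have Hfrac : q x / (Rmax 0 (q x) + 1) <= 1.
    apply: (Rmult_le_reg_r (Rmax 0 (q x) + 1)); first exact: denom_pos.
    by rewrite /Rdiv Rmult_assoc Rinv_l; have := Rmax_r 0 (q x); lra.
  have HTq : T * q x <= g.
    rewrite HT; have -> : g / (Rmax 0 (q x) + 1) * q x = g * (q x / (Rmax 0 (q x) + 1))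
      by field; have := denom_pos x; lra.
    have Hq1 : 0 <= q x / (Rmax 0 (q x) + 1)
      by apply: Rmult_le_pos; [lra | exact/Rlt_le/Rinv_0_lt_compat/denom_pos].
    nra.
  by have := Rmin_r delta T; nra.
Qed.

End StepSize.

Arguments step_size_range {n f gV q delta rho lam}.
Arguments step_size_condition {n f gV q delta rho lam}.

Theorem corollary4p7 (n : nat) (f : vec n -> vec n) (V : vec n -> R)
    (gV : vec n -> vec n) (HV : vec n -> 'I_n -> vec n) (r : R) (q : vec n -> R)
    (delta lambda : R) :
  loc_lipschitz f ->
  f vzero = vzero ->
  C2_with V gV HV ->
  (forall x, 0 <= V x) ->
  lyapunov f V gV ->
  0 < r ->
  (forall x, is_max (fun s => exists h, 0 <= h <= r /\
                 s = quadform (HV (vadd x (vscale h (f x)))) (f x)) (q x)) ->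
  0 < delta -> delta <= r ->
  0 < lambda < 1 ->
  (exists rho, 0 < rho /\ forall x, vnorm x < rho ->
      delta * q x <= - 2 * (1 - lambda) * dot (gV x) (f x)) ->
  (exists phi : vec n -> R, vcont phi /\ (forall x, 0 < phi x <= r) /\ URGAS phi f) /\
  (forall phi : vec n -> R, vcont phi -> (forall x, 0 < phi x <= r) ->
      (forall x, phi x * q x <= - 2 * (1 - lambda) * dot (gV x) (f x)) ->
      URGAS phi f).
Proof.
move=> Hf Hf0 [HV1 [HV2 HV3]] _ HL _ Hq Hd Hdr [Hlam0 Hlam1] [rho [Hrho Hnear]].
have V_cont x : seq_cont_at V x := seq_cont_of_cont _ _ (gradient_cont _ _ x HV1).
have D_cont x : seq_cont_at (fun y => dot (gV y) (f y)) x.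
  have HgV := coords_seq_vcont _ x (fun i => seq_cont_of_cont _ _ (gradient_cont _ _ x (HV2 i))).
  by move=> y Hy; exact: (dot_cv _ _ _ _ (HgV y Hy) (loc_lipschitz_seq_cont _ x Hf y Hy)).
have D_nonpos := lyapunov_derivative_nonpos Hf0 HL.
have q_cont := max_over_interval_cont (fun y x h hh => euler_quadform_cont Hf HV3) Hq.
have q_bound x h : 0 <= h <= r -> quadform (HV (vadd x (vscale h (f x)))) (f x) <= q x.
  by move=> Hh; apply: (proj2 (Hq x)); exists h.
have admissible_urgas (phi : vec n -> R) : (forall x, 0 < phi x <= r) ->
    (forall x, phi x * q x <= - 2 * (1 - lambda) * dot (gV x) (f x)) -> URGAS phi f.
  move=> Hp Hpq; apply: (urgas_of_descent HL V_cont D_cont Hlam0 (fun x => proj1 (Hp x)) D_nonpos).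
  exact: (euler_descent HV1 HV2 q_bound (Rlt_le _ _ Hlam1) Hp D_nonpos Hpq).
have phi_range := step_size_range (q := q) Hd Hrho Hlam1 D_nonpos (proj2 (proj2 (proj2 HL))).
have phi_r x : 0 < step_size f gV q delta rho lambda x <= r by have := phi_range x; lra.
split; last by move=> phi _; exact: admissible_urgas.
exists (step_size f gV q delta rho lambda); split; first exact: (step_size_cont f gV q delta rho lambda q_cont D_cont).
split => //; apply: admissible_urgas => //.
exact: (step_size_condition Hrho Hlam1 D_nonpos Hnear (fun x => proj1 (phi_r x))).
Qed.
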